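(* In every orthomodular lattice, for all elements $a,b,c,d$ the following hold: (1) $(a\to_1 b)\cap(b\to_2 c)\cap(c\to_1 d)\cap(d\to_2 a) = (a\equiv b)\cap(b\equiv c)\cap(c\equiv d)$; (2) $(a\to_5 b)\cap(b\to_5 c)\cap(c\to_5 d)\cap(d\to_5 a) = (a\equiv b)\cap(b\equiv c)\cap(c\equiv d)$; (3) $(a\to_1 b)\cap(b\to_2 c)\cap(c\to_1 a)\le a\equiv c$; (4) $(a\equiv b)\cap((b\equiv c)\cup(a\equiv c)) = ((a\equiv b)\cap(b\equiv c))\cup((a\equiv b)\cap(a\equiv c))$; (5) $(a\equiv b)\cap((b\equiv c)\cup(a\equiv c))\le a\equiv c$; (6) $(a\equiv b)\to_0((a\equiv c)\equiv(b\equiv c)) = 1$.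
   Context: An orthomodular lattice is an ortholattice $(L,\cap,\cup,{}',0,1)$ satisfying $a\le b\Rightarrow b=a\cup(a'\cap b)$. Notation: $a\equiv b=(a\cap b)\cup(a'\cap b')$; $a\to_0 b=a'\cup b$; $a\to_1 b=a'\cup(a\cap b)$; $a\to_2 b=b\cup(a'\cap b')$; $a\to_5 b=(a\cap b)\cup(a'\cap b)\cup(a'\cap b')$. *)

Set Implicit Arguments.

Record OML := {
  car :> Type;
  meet : car -> car -> car;
  join : car -> car -> car;
  oc : car -> car;
  zero : car;
  one : car;
  join_comm : forall a b, join a b = join b a;
  meet_comm : forall a b, meet a b = meet b a;
  join_assoc : forall a b c, join a (join b c) = join (join a b) c;
  meet_assoc : forall a b c, meet a (meet b c) = meet (meet a b) c;
  join_absorb : forall a b, join a (meet a b) = a;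
  meet_absorb : forall a b, meet a (join a b) = a;
  join_zero : forall a, join a zero = a;
  meet_one : forall a, meet a one = a;
  oc_invol : forall a, oc (oc a) = a;
  oc_antitone : forall a b, join a b = b -> join (oc b) (oc a) = oc a;
  oc_join : forall a, join a (oc a) = one;
  oc_meet : forall a, meet a (oc a) = zero;
  orthomodular : forall a b, join a b = b -> b = join a (meet (oc a) b)
}.

Section Ops.
Variable L : OML.
Definition le (a b : L) : Prop := join L a b = b.
Definition biimp (a b : L) : L := join L (meet L a b) (meet L (oc L a) (oc L b)).
Definition imp0 (a b : L) : L := join L (oc L a) b.
Definition imp1 (a b : L) : L := join L (oc L a) (meet L a b).
Definition imp2 (a b : L) : L := join L b (meet L (oc L a) (oc L b)).
Definition imp5 (a b : L) : L :=
  join L (join L (meet L a b) (meet L (oc L a) b)) (meet L (oc L a) (oc L b)).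
End Ops.
Arguments le {L}.
Arguments biimp {L}.
Arguments imp0 {L}.
Arguments imp1 {L}.
Arguments imp2 {L}.
Arguments imp5 {L}.

(* Everything rests on one inequality: if u ⊥ v, v ⊥ p, p ⊥ q and q ⊥ u, then
   (u ⊔ v) ⊓ (p ⊔ q) ≤ (u ⊓ p) ⊔ (v ⊓ q).  Here u ⊔ p commutes with both factors,
   so by Foulis–Holland the meet splits along u ⊔ p and its complement, and on
   these two pieces the factors reduce to u, p and to v, q.  Every implication
   and biconditional of the theorem is a join of two such orthogonal terms, so a
   cycle of them collapses to "all true or all false", which is below each
   biconditional of the cycle. *)
From Stdlib Require Import Setoid.

Section OMLTheory.
Variable L : OML.
Local Notation "x ⊓ y" := (meet L x y) (at level 40, left associativity).
Local Notation "x ⊔ y" := (join L x y) (at level 50, left associativity).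
Local Notation "x ^c" := (oc L x) (at level 30).

Lemma join_idem (x : L) : x ⊔ x = x.
Proof. rewrite <- (meet_absorb L x x) at 2. apply join_absorb. Qed.

Lemma le_refl (x : L) : le x x.
Proof. apply join_idem. Qed.

Lemma le_trans (x y z : L) : le x y -> le y z -> le x z.
Proof. unfold le; intros Hxy Hyz. rewrite <- Hyz, join_assoc, Hxy. reflexivity. Qed.

Lemma le_antisym (x y : L) : le x y -> le y x -> x = y.
Proof. unfold le; intros Hxy Hyx. rewrite <- Hxy, join_comm. exact (eq_sym Hyx). Qed.

Lemma le_meetE (x y : L) : le x y -> x ⊓ y = x.
Proof. unfold le; intro H. rewrite <- H. apply meet_absorb. Qed.

Lemma le_meetI (x y : L) : x ⊓ y = x -> le x y.
Proof. unfold le; intro H. rewrite <- H, join_comm, meet_comm. apply join_absorb. Qed.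

Lemma join_lub (x y z : L) : le x z -> le y z -> le (x ⊔ y) z.
Proof. unfold le; intros Hx Hy. rewrite <- join_assoc, Hy, Hx. reflexivity. Qed.

Lemma meet_glb (x y z : L) : le z x -> le z y -> le z (x ⊓ y).
Proof.
  intros Hx Hy. apply le_meetI.
  rewrite meet_assoc, (le_meetE _ _ Hx), (le_meetE _ _ Hy). reflexivity.
Qed.

Lemma le_joinl (x y z : L) : le x y -> le x (y ⊔ z).
Proof.
  intro H. apply le_trans with y; [exact H |].
  unfold le. rewrite join_assoc, join_idem. reflexivity.
Qed.

Lemma le_joinr (x y z : L) : le x z -> le x (y ⊔ z).
Proof. rewrite join_comm. apply le_joinl. Qed.

Lemma le_meetl (x y z : L) : le x z -> le (x ⊓ y) z.
Proof.
  intro H. apply le_trans with x; [| exact H].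
  unfold le. rewrite join_comm, join_absorb. reflexivity.
Qed.

Lemma le_meetr (x y z : L) : le y z -> le (x ⊓ y) z.
Proof. rewrite meet_comm. apply le_meetl. Qed.

Lemma le_one (x : L) : le x (one L).
Proof. apply le_meetI, meet_one. Qed.

Lemma le_zero (x : L) : le (zero L) x.
Proof. unfold le. rewrite join_comm. apply join_zero. Qed.

(* Decides inequalities between meet/join terms whose atoms match syntactically. *)
Ltac lat := first
 [ apply le_refl
 | assumption
 | apply le_zero | apply le_one
 | apply join_lub; lat
 | apply meet_glb; lat
 | apply le_joinl; lat
 | apply le_joinr; lat
 | apply le_meetl; lat
 | apply le_meetr; lat ].

Lemma oc_le (x y : L) : le x y -> le (y^c) (x^c).
Proof. apply oc_antitone. Qed.

Lemma le_oc_sym (x y : L) : le x (y^c) -> le y (x^c).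
Proof. intro H. apply oc_le in H. rewrite oc_invol in H. exact H. Qed.

Lemma oc_join_meet (x y : L) : (x ⊔ y)^c = x^c ⊓ y^c.
Proof.
  apply le_antisym.
  - apply meet_glb; apply oc_le; lat.
  - apply le_oc_sym, join_lub; apply le_oc_sym; lat.
Qed.

Lemma oc_meet_join (x y : L) : (x ⊓ y)^c = x^c ⊔ y^c.
Proof. rewrite <- (oc_invol L (x^c ⊔ y^c)), oc_join_meet, !oc_invol. reflexivity. Qed.

Ltac olat := rewrite ?oc_join_meet, ?oc_meet_join, ?oc_invol; lat.

Lemma le_le_oc_zero (z y : L) : le z y -> le z (y^c) -> z = zero L.
Proof.
  intros Hy Hyc. apply le_antisym; [| apply le_zero].
  rewrite <- (oc_meet L y). lat.
Qed.

Lemma orthomodular_eq (x y : L) : le x y -> le (y ⊓ x^c) (zero L) -> x = y.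
Proof.
  intros Hxy Hzero. rewrite (orthomodular L x Hxy).
  rewrite meet_comm, (le_antisym _ _ Hzero (le_zero _)), join_zero. reflexivity.
Qed.

(** * Commutation and the Foulis–Holland theorem *)

Definition commutes (x y : L) : Prop := x = (x ⊓ y) ⊔ (x ⊓ y^c).

Lemma commutes_ocr (x y : L) : commutes x y -> commutes x (y^c).
Proof. unfold commutes. rewrite oc_invol, (join_comm L (x ⊓ y^c)). auto. Qed.

Lemma commutes_le (x y : L) : le x y -> commutes x y.
Proof.
  intro H. unfold commutes.
  rewrite (le_le_oc_zero (x ⊓ y^c) y), join_zero by lat.
  exact (eq_sym (le_meetE _ _ H)).
Qed.

Lemma commutes_le_oc (x y : L) : le x (y^c) -> commutes x y.
Proof. intro H. apply commutes_le, commutes_ocr in H. rewrite oc_invol in H. exact H. Qed.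

Lemma commutes_oc_decomp (x y : L) :
  commutes x y -> x^c = (x^c ⊔ y^c) ⊓ (x^c ⊔ y).
Proof.
  unfold commutes; intro H. rewrite H at 1.
  rewrite oc_join_meet, !oc_meet_join, oc_invol. reflexivity.
Qed.

Lemma commutes_sym (x y : L) : commutes x y -> commutes y x.
Proof.
  intro H. unfold commutes. apply le_antisym; [| lat].
  assert (Hxy : le (x ⊓ y) y) by lat.
  rewrite (orthomodular L _ Hxy) at 1.
  apply join_lub; [lat |].
  apply le_joinr, meet_glb; [lat |].
  rewrite (commutes_oc_decomp _ _ H). apply meet_glb; olat.
Qed.

Lemma commutes_ocl (x y : L) : commutes x y -> commutes (x^c) y.
Proof. intro H. apply commutes_sym, commutes_ocr, commutes_sym, H. Qed.

Lemma commutes_join (x y z : L) : commutes x z -> commutes y z -> commutes (x ⊔ y) z.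
Proof.
  unfold commutes; intros Hx Hy. apply le_antisym; [| lat].
  rewrite Hx at 1. rewrite Hy at 1. lat.
Qed.

Lemma commutes_meet (x y z : L) : commutes x z -> commutes y z -> commutes (x ⊓ y) z.
Proof.
  intros Hx Hy.
  pose proof (commutes_ocl _ _ (commutes_join _ _ _ (commutes_ocl _ _ Hx) (commutes_ocl _ _ Hy))) as H.
  rewrite oc_join_meet, !oc_invol in H. exact H.
Qed.

Lemma sasaki_commutes (x y : L) : commutes x y -> x ⊓ (x^c ⊔ y) = x ⊓ y.
Proof.
  intro H. symmetry. apply orthomodular_eq; [lat |].
  rewrite <- (oc_meet L x). apply meet_glb; [lat |].
  rewrite (commutes_oc_decomp _ _ H). olat.
Qed.

Lemma foulis_holland (x y z : L) :
  commutes x y -> commutes x z -> x ⊓ (y ⊔ z) = (x ⊓ y) ⊔ (x ⊓ z).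
Proof.
  intros Hy Hz. symmetry. apply orthomodular_eq; [lat |].
  pose proof (sasaki_commutes _ _ (commutes_ocr _ _ Hy)) as Ky.
  pose proof (sasaki_commutes _ _ (commutes_ocr _ _ Hz)) as Kz.
  rewrite <- (oc_meet L (y ⊔ z)), oc_join_meet.
  rewrite oc_join_meet, !oc_meet_join.
  apply meet_glb; [lat |].
  apply le_trans with ((x ⊓ (x^c ⊔ y^c)) ⊓ (x ⊓ (x^c ⊔ z^c))); [lat |].
  rewrite Ky, Kz. lat.
Qed.

(** * Meets of joins of orthogonal elements *)

Lemma meet_join_orth (u v x : L) : le u x -> le v (x^c) -> (u ⊔ v) ⊓ x = u.
Proof.
  intros Hu Hv. rewrite meet_comm, foulis_holland.
  - rewrite (le_le_oc_zero (x ⊓ v) x), join_zero, meet_comm by lat.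
    exact (le_meetE _ _ Hu).
  - apply commutes_sym, commutes_le, Hu.
  - apply commutes_sym, commutes_le_oc, Hv.
Qed.

Lemma meet_join_orth_cycle (u v p q : L) :
  le u (v^c) -> le v (p^c) -> le p (q^c) -> le q (u^c) ->
  le ((u ⊔ v) ⊓ (p ⊔ q)) ((u ⊓ p) ⊔ (v ⊓ q)).
Proof.
  intros Huv Hvp Hpq Hqu.
  assert (Hv : le v ((u ⊔ p)^c))
    by (rewrite oc_join_meet; apply meet_glb; [apply le_oc_sym |]; assumption).
  assert (Hq : le q ((u ⊔ p)^c))
    by (rewrite oc_join_meet; apply meet_glb; [| apply le_oc_sym]; assumption).
  assert (Hu_in : (u ⊔ v) ⊓ (u ⊔ p) = u) by (apply meet_join_orth; [lat | exact Hv]).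
  assert (Hp_in : (p ⊔ q) ⊓ (u ⊔ p) = p) by (apply meet_join_orth; [lat | exact Hq]).
  assert (Hv_out : (u ⊔ v) ⊓ (u ⊔ p)^c = v)
    by (rewrite join_comm; apply meet_join_orth; [exact Hv | rewrite oc_invol; lat]).
  assert (Hq_out : (p ⊔ q) ⊓ (u ⊔ p)^c = q)
    by (rewrite join_comm; apply meet_join_orth; [exact Hq | rewrite oc_invol; lat]).
  assert (Hsplit : commutes ((u ⊔ v) ⊓ (p ⊔ q)) (u ⊔ p)).
  { apply commutes_meet; apply commutes_join;
      first [apply commutes_le; lat | apply commutes_le_oc; assumption]. }
  rewrite Hsplit. apply join_lub.
  - apply le_trans with (((u ⊔ v) ⊓ (u ⊔ p)) ⊓ ((p ⊔ q) ⊓ (u ⊔ p))); [lat |].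
    rewrite Hu_in, Hp_in. lat.
  - apply le_trans with (((u ⊔ v) ⊓ (u ⊔ p)^c) ⊓ ((p ⊔ q) ⊓ (u ⊔ p)^c)); [lat |].
    rewrite Hv_out, Hq_out. lat.
Qed.

Lemma meet_join_compl (x p q : L) :
  le p x -> le q (x^c) -> le ((x ⊔ q) ⊓ (x^c ⊔ p)) (p ⊔ q).
Proof.
  intros Hp Hq.
  apply le_trans with ((x^c ⊔ p) ⊓ (q ⊔ x)); [lat |].
  apply le_trans with ((x^c ⊓ q) ⊔ (p ⊓ x)); [| lat].
  apply meet_join_orth_cycle.
  - apply oc_le, Hp.
  - apply le_trans with x; [exact Hp | apply le_oc_sym, Hq].
  - exact Hq.
  - rewrite oc_invol. apply le_refl.
Qed.

(** * Implications and biconditionals *)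

Lemma biimp_le_imp1 (x y : L) : le (biimp x y) (imp1 x y).
Proof. unfold biimp, imp1. lat. Qed.

Lemma biimp_le_imp2 (x y : L) : le (biimp x y) (imp2 x y).
Proof. unfold biimp, imp2. lat. Qed.

Lemma biimp_le_imp5 (x y : L) : le (biimp x y) (imp5 x y).
Proof. unfold biimp, imp5. lat. Qed.

Lemma imp5_le_imp1 (x y : L) : le (imp5 x y) (imp1 x y).
Proof. unfold imp5, imp1. lat. Qed.

Lemma imp5_le_imp2 (x y : L) : le (imp5 x y) (imp2 x y).
Proof. unfold imp5, imp2. lat. Qed.

Lemma imp2_meet_imp1 (x y z : L) :
  le (imp2 x y ⊓ imp1 y z) ((y ⊓ z) ⊔ (x^c ⊓ y^c)).
Proof.
  unfold imp1, imp2.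
  apply le_trans with ((y ⊔ (x^c ⊓ y^c)) ⊓ (y^c ⊔ (y ⊓ z))); [lat |].
  apply meet_join_compl; lat.
Qed.

Lemma join_meet_biimp (u v x y : L) :
  le u x -> le v (x^c) -> le ((u ⊔ v) ⊓ biimp x y) ((u ⊓ y) ⊔ (v ⊓ y^c)).
Proof.
  intros Hu Hv. unfold biimp.
  apply le_trans with ((u ⊓ (x ⊓ y)) ⊔ (v ⊓ (x^c ⊓ y^c))); [| lat].
  apply meet_join_orth_cycle.
  - apply le_trans with x; [exact Hu | apply le_oc_sym, Hv].
  - olat.
  - olat.
  - apply le_meetl, oc_le, Hu.
Qed.

Lemma biimp_meet_biimp (x y z : L) :
  le (biimp x y ⊓ biimp y z) ((x ⊓ y ⊓ z) ⊔ (x^c ⊓ y^c ⊓ z^c)).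
Proof. apply join_meet_biimp; lat. Qed.

Lemma biimp_chain3 (a b c d : L) :
  le (biimp a b ⊓ biimp b c ⊓ biimp c d)
     ((a ⊓ b ⊓ c ⊓ d) ⊔ (a^c ⊓ b^c ⊓ c^c ⊓ d^c)).
Proof.
  apply le_trans with (((a ⊓ b ⊓ c) ⊔ (a^c ⊓ b^c ⊓ c^c)) ⊓ biimp c d).
  - apply meet_glb; [apply le_meetl, biimp_meet_biimp | lat].
  - apply join_meet_biimp; lat.
Qed.

Lemma biimp_meet_join (a b c : L) :
  le (biimp a b ⊓ (biimp b c ⊔ biimp a c)) (biimp a c ⊓ biimp b c).
Proof.
  unfold biimp.
  apply le_trans with (((a ⊓ b) ⊔ (a^c ⊓ b^c)) ⊓
     (((a ⊓ c) ⊔ (b ⊓ c)) ⊔ ((a^c ⊓ c^c) ⊔ (b^c ⊓ c^c)))); [lat |].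
  eapply le_trans; [apply meet_join_orth_cycle; olat | lat].
Qed.

Lemma imp1_imp2_cycle (a b c d : L) :
  le (imp1 a b ⊓ imp2 b c ⊓ imp1 c d ⊓ imp2 d a)
     ((a ⊓ b ⊓ c ⊓ d) ⊔ (a^c ⊓ b^c ⊓ c^c ⊓ d^c)).
Proof.
  apply le_trans with (((a ⊓ b) ⊔ (d^c ⊓ a^c)) ⊓ ((c ⊓ d) ⊔ (b^c ⊓ c^c))).
  - apply meet_glb.
    + apply le_trans with (imp2 d a ⊓ imp1 a b); [lat | apply imp2_meet_imp1].
    + apply le_trans with (imp2 b c ⊓ imp1 c d); [lat | apply imp2_meet_imp1].
  - eapply le_trans; [apply meet_join_orth_cycle; olat | lat].
Qed.

Lemma biimp_chain3_le_biimp (a b c d : L) :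
  le (biimp a b ⊓ biimp b c ⊓ biimp c d) (biimp d a).
Proof. eapply le_trans; [apply biimp_chain3 | unfold biimp; lat]. Qed.

Lemma biimp_chain3_le_cycle (i j : L -> L -> L) (a b c d : L) :
  (forall x y, le (biimp x y) (i x y)) -> (forall x y, le (biimp x y) (j x y)) ->
  le (biimp a b ⊓ biimp b c ⊓ biimp c d) (i a b ⊓ j b c ⊓ i c d ⊓ j d a).
Proof.
  intros Hi Hj. repeat apply meet_glb.
  - apply le_trans with (biimp a b); [lat | apply Hi].
  - apply le_trans with (biimp b c); [lat | apply Hj].
  - apply le_trans with (biimp c d); [lat | apply Hi].
  - apply le_trans with (biimp d a); [apply biimp_chain3_le_biimp | apply Hj].
Qed.

Lemma imp1_imp2_cycle_eq (a b c d : L) :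
  imp1 a b ⊓ imp2 b c ⊓ imp1 c d ⊓ imp2 d a = biimp a b ⊓ biimp b c ⊓ biimp c d.
Proof.
  apply le_antisym.
  - eapply le_trans; [apply imp1_imp2_cycle | unfold biimp; lat].
  - apply biimp_chain3_le_cycle; [apply biimp_le_imp1 | apply biimp_le_imp2].
Qed.

Lemma imp5_cycle_eq (a b c d : L) :
  imp5 a b ⊓ imp5 b c ⊓ imp5 c d ⊓ imp5 d a = biimp a b ⊓ biimp b c ⊓ biimp c d.
Proof.
  apply le_antisym.
  - rewrite <- imp1_imp2_cycle_eq.
    repeat apply meet_glb.
    + apply le_meetl, le_meetl, le_meetl, imp5_le_imp1.
    + apply le_meetl, le_meetl, le_meetr, imp5_le_imp2.
    + apply le_meetl, le_meetr, imp5_le_imp1.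
    + apply le_meetr, imp5_le_imp2.
  - apply biimp_chain3_le_cycle; apply biimp_le_imp5.
Qed.

Lemma imp1_imp2_imp1_le_biimp (a b c : L) :
  le (imp1 a b ⊓ imp2 b c ⊓ imp1 c a) (biimp a c).
Proof.
  apply le_trans with (imp1 a b ⊓ ((c ⊓ a) ⊔ (b^c ⊓ c^c))).
  - apply meet_glb; [lat |].
    apply le_trans with (imp2 b c ⊓ imp1 c a); [lat | apply imp2_meet_imp1].
  - unfold imp1 at 1.
    apply le_trans with ((a^c ⊔ (a ⊓ b)) ⊓ ((b^c ⊓ c^c) ⊔ (c ⊓ a))); [lat |].
    eapply le_trans; [apply meet_join_orth_cycle; olat | unfold biimp; lat].
Qed.

Lemma biimp_meet_join_distr (a b c : L) :
  biimp a b ⊓ (biimp b c ⊔ biimp a c) = (biimp a b ⊓ biimp b c) ⊔ (biimp a b ⊓ biimp a c).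
Proof.
  apply le_antisym; [| lat].
  apply le_trans with (biimp a b ⊓ biimp b c); [| lat].
  apply meet_glb; [lat |].
  eapply le_trans; [apply biimp_meet_join | lat].
Qed.

Lemma biimp_meet_join_le (a b c : L) :
  le (biimp a b ⊓ (biimp b c ⊔ biimp a c)) (biimp a c).
Proof. eapply le_trans; [apply biimp_meet_join | lat]. Qed.

Lemma oc_zero : (zero L)^c = one L.
Proof. rewrite <- (oc_join L (zero L)), join_comm, join_zero. reflexivity. Qed.

Lemma imp0_eq_one (x y : L) : x ⊓ y^c = zero L -> imp0 x y = one L.
Proof.
  intro H. unfold imp0.
  rewrite <- (oc_invol L (x^c ⊔ y)), oc_join_meet, oc_invol, H. apply oc_zero.
Qed.

Lemma meet_oc_biimp (e p q : L) :
  le (e ⊓ (q ⊔ p)) (p ⊓ q) -> e ⊓ (biimp p q)^c = zero L.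
Proof.
  intro H. apply le_le_oc_zero with (p ⊓ q).
  - eapply le_trans; [| exact H]. unfold biimp. olat.
  - unfold biimp. olat.
Qed.

Lemma biimp_imp0_biimp (a b c : L) :
  imp0 (biimp a b) (biimp (biimp a c) (biimp b c)) = one L.
Proof. apply imp0_eq_one, meet_oc_biimp, biimp_meet_join. Qed.

End OMLTheory.

Theorem theorem4 (L : OML) (a b c d : L) :
  (* (1) *)
  meet L (meet L (meet L (imp1 a b) (imp2 b c)) (imp1 c d)) (imp2 d a)
    = meet L (meet L (biimp a b) (biimp b c)) (biimp c d) /\
  (* (2) *)
  meet L (meet L (meet L (imp5 a b) (imp5 b c)) (imp5 c d)) (imp5 d a)
    = meet L (meet L (biimp a b) (biimp b c)) (biimp c d) /\
  (* (3) *)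
  le (meet L (meet L (imp1 a b) (imp2 b c)) (imp1 c a)) (biimp a c) /\
  (* (4) *)
  meet L (biimp a b) (join L (biimp b c) (biimp a c))
    = join L (meet L (biimp a b) (biimp b c)) (meet L (biimp a b) (biimp a c)) /\
  (* (5) *)
  le (meet L (biimp a b) (join L (biimp b c) (biimp a c))) (biimp a c) /\
  (* (6) *)
  imp0 (biimp a b) (biimp (biimp a c) (biimp b c)) = one L.
Proof.
  split; [apply imp1_imp2_cycle_eq |].
  split; [apply imp5_cycle_eq |].
  split; [apply imp1_imp2_imp1_le_biimp |].
  split; [apply biimp_meet_join_distr |].
  split; [apply biimp_meet_join_le |].
  apply biimp_imp0_biimp.
Qed.
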